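(* Let $(r_k)_{k\ge 1}$ be a sequence of real numbers and let $C_1, C_2, a, \gamma, \varepsilon$ be constants with $0<C_1<1$, $C_2>0$, $0<a<1$, $\gamma\in\mathbb{R}$, and $0<\varepsilon<1-a$. Suppose that for all integers $k\ge 1$, \[ r_{k+1} \le (1 - C_1 k^{-a})\, r_k + C_2\left(k^{-2a+\varepsilon} + k^{-2\gamma+a+\varepsilon}\right). \] Then there exists a constant $\mathscr{E}$ (independent of $k$) such that for all $k\ge 1$, \[ r_{k+1} \le \left(k^{-2\gamma+2a+\varepsilon} + k^{-a+\varepsilon}\right)\mathscr{E}. \]
   Context: In the paper's application, $\gamma$ is the exponent of the step sizes $\gamma_k = O(k^{-\gamma})$ and $a$ is the exponent of the averaging rates $\alpha_k=O(k^{-a})$, with $\gamma>a>0$; the lemma itself places no further condition on $\gamma$. *)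

From Stdlib Require Import Reals.
Open Scope R_scope.

(* Write s_k = k^(-2 gamma + 2 a + eps) + k^(-a + eps) and c_k = C1 k^(-a).  Then the
   forcing term is exactly (C2 / C1) c_k s_k, so the recursion reads
   r_(k+1) <= (1 - c_k) r_k + (C2 / C1) c_k s_k.  Since a < 1, the target s_k varies
   slowly compared with the contraction rate: s_k <= (1 + c_(k+1) / 2) s_(k+1) for large k.
   For E >= 2 C2 / C1 the bound r_(k+1) <= E s_k is then inductive, because
   (1 - c)(1 + c/2) + c/2 = 1 - c^2/2 <= 1; the finitely many earlier indices only
   enlarge E.  The argument uses no constraint on eps. *)

From Stdlib Require Import Reals.
Open Scope R_scope.
From Stdlib Require Import Lra Lia Psatz.

Lemma contraction_step (c delta E s0 s1 u0 u1 : R) :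
  0 <= c <= 1 -> 0 <= delta -> 2 * delta <= E -> 0 < s1 ->
  s0 <= (1 + c / 2) * s1 -> u0 <= s0 * E ->
  u1 <= (1 - c) * u0 + delta * c * s1 -> u1 <= s1 * E.
Proof.
  intros Hc Hdelta HE Hs1 Hs Hu0 Hu1.
  assert (Hu : u0 <= (1 + c / 2) * s1 * E)
    by (apply Rle_trans with (s0 * E); [exact Hu0 | apply Rmult_le_compat_r; lra]).
  assert (H1 : (1 - c) * u0 <= (1 - c) * ((1 + c / 2) * s1 * E))
    by (apply Rmult_le_compat_l; lra).
  assert (H2 : delta * c * s1 <= E / 2 * c * s1)
    by (apply Rmult_le_compat_r; [lra | apply Rmult_le_compat_r; lra]).
  assert (Hsq : 0 <= c * c * s1 * E)
    by (apply Rmult_le_pos; [apply Rmult_le_pos; nra | lra]).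
  nra.
Qed.

Lemma finite_ratio_bound (u s : nat -> R) (E0 : R) (n : nat) :
  (forall k, 0 < s k) ->
  exists E, E0 <= E /\ forall k, (k < n)%nat -> u (S k) <= s k * E.
Proof.
  intros Hs. induction n as [|n [E [HE Hn]]].
  - exists E0. split; [apply Rle_refl | intros k Hk; lia].
  - exists (Rmax E (u (S n) / s n)). split; [eapply Rle_trans; [exact HE | apply Rmax_l]|].
    intros k Hk. destruct (Nat.eq_dec k n) as [->|Hne].
    + assert (Hu : u (S n) = s n * (u (S n) / s n)) by (field; apply Rgt_not_eq, Hs).
      rewrite Hu at 1. apply Rmult_le_compat_l; [apply Rlt_le, Hs | apply Rmax_r].
    + eapply Rle_trans; [apply Hn; lia|].
      apply Rmult_le_compat_l; [apply Rlt_le, Hs | apply Rmax_l].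
Qed.

Lemma bound_by_slowly_varying (u s c : nat -> R) (delta : R) (N : nat) :
  0 <= delta ->
  (forall k, 0 < s k) ->
  (forall k, (1 <= k)%nat -> 0 <= c k <= 1) ->
  (forall k, (N <= k)%nat -> s k <= (1 + c (S k) / 2) * s (S k)) ->
  (forall k, (1 <= k)%nat -> u (S k) <= (1 - c k) * u k + delta * c k * s k) ->
  exists E, forall k, (1 <= k)%nat -> u (S k) <= s k * E.
Proof.
  intros Hdelta Hs Hc Hslow Hrec.
  destruct (finite_ratio_bound u s (2 * delta) (S (S N)) Hs) as [E [HE Hinit]].
  exists E. induction k as [|k IH]; intros Hk; [lia|].
  destruct (Nat.lt_ge_cases (S k) (S (S N))) as [HkN|HkN]; [apply Hinit; exact HkN|].
  apply (contraction_step (c (S k)) delta E (s k) (s (S k)) (u (S k))).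
  - apply Hc; lia.
  - exact Hdelta.
  - exact HE.
  - apply Hs.
  - apply Hslow; lia.
  - apply IH; lia.
  - apply Hrec; lia.
Qed.

Lemma exp_le_exp (x y : R) : x <= y -> exp x <= exp y.
Proof. intros [H | ->]; [apply Rlt_le, exp_increasing, H | apply Rle_refl]. Qed.

Lemma ln_le (x y : R) : 0 < x -> x <= y -> ln x <= ln y.
Proof. intros Hx [H | ->]; [apply Rlt_le, ln_increasing; lra | apply Rle_refl]. Qed.

Lemma Rpower_pos (x p : R) : 0 < Rpower x p.
Proof. apply exp_pos. Qed.

Lemma Rpower_le_1 (x p : R) : 1 <= x -> p <= 0 -> Rpower x p <= 1.
Proof.
  intros Hx Hp. rewrite <- (Rpower_O x) by lra. apply Rle_Rpower; assumption.
Qed.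

Lemma exp_le_1_add_2x (z : R) : 0 <= z <= 1 / 2 -> exp z <= 1 + 2 * z.
Proof.
  intros Hz.
  assert (Hinv : exp z * exp (- z) = 1)
    by (rewrite <- exp_plus, Rplus_opp_r; apply exp_0).
  pose proof (exp_ineq1_le (- z)). pose proof (exp_pos z).
  nra.
Qed.

Lemma ln_succ_sub_le (x : R) : 0 < x -> 0 <= ln (x + 1) - ln x <= / x.
Proof.
  intros Hx. split.
  - assert (ln x <= ln (x + 1)) by (apply ln_le; lra). lra.
  - assert (Hexp : x + 1 <= x * exp (/ x)).
    { pose proof (exp_ineq1_le (/ x)).
      assert (x * (1 + / x) = x + 1) by (field; lra). nra. }
    apply ln_le in Hexp; [|lra].
    rewrite ln_mult, ln_exp in Hexp by (apply exp_pos || lra). lra.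
Qed.

Lemma Rpower_le_succ (x p P : R) :
  0 < x -> Rabs p <= P -> Rpower x p <= Rpower (x + 1) p * exp (P / x).
Proof.
  intros Hx Hp. unfold Rpower. rewrite <- exp_plus. apply exp_le_exp.
  pose proof (ln_succ_sub_le x Hx) as Hd.
  pose proof (Rle_abs p). pose proof (Rle_abs (- p)). rewrite Rabs_Ropp in *.
  unfold Rdiv. nra.
Qed.

Lemma Rpower_sum_le_succ (x p q : R) :
  0 < x -> 2 * (Rabs p + Rabs q) <= x ->
  Rpower x p + Rpower x q
    <= (1 + 2 * (Rabs p + Rabs q) / x) * (Rpower (x + 1) p + Rpower (x + 1) q).
Proof.
  intros Hx HP. set (P := Rabs p + Rabs q) in *.
  pose proof (Rabs_pos p). pose proof (Rabs_pos q).
  assert (Hexp : exp (P / x) <= 1 + 2 * P / x).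
  { replace (2 * P / x) with (2 * (P / x)) by (field; lra).
    apply exp_le_1_add_2x. split.
    - apply Rmult_le_pos; [unfold P; lra | apply Rlt_le, Rinv_0_lt_compat, Hx].
    - assert (P / x * x = P) by (field; lra).
      apply Rmult_le_reg_r with x; [exact Hx|]. unfold P in *; lra. }
  pose proof (Rpower_le_succ x p P Hx ltac:(unfold P; lra)).
  pose proof (Rpower_le_succ x q P Hx ltac:(unfold P; lra)).
  pose proof (Rpower_pos (x + 1) p). pose proof (Rpower_pos (x + 1) q).
  nra.
Qed.

Lemma Rpower_unbounded (b M : R) :
  0 < b -> exists N : nat, forall k, (N <= k)%nat -> M <= Rpower (INR k) b.
Proof.
  intros Hb. set (X := Rpower (Rmax M 1) (/ b)).
  destruct (INR_archimed 1 X Rlt_0_1) as [N HN]. rewrite Rmult_1_r in HN.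
  exists N. intros k Hk.
  assert (HXk : X <= INR k) by (apply le_INR in Hk; lra).
  apply Rle_trans with (Rpower X b).
  - unfold X. rewrite Rpower_mult, Rinv_l, Rpower_1 by (lra || pose proof (Rmax_r M 1); lra).
    apply Rmax_l.
  - apply Rle_Rpower_l; [lra | split; [apply Rpower_pos | exact HXk]].
Qed.

Lemma eventually_le_mul_Rpower_succ (a M : R) :
  a < 1 -> exists N : nat, forall k, (N <= k)%nat -> M <= INR k * Rpower (INR k + 1) (- a).
Proof.
  intros Ha. destruct (Rpower_unbounded (1 - a) (2 * M) ltac:(lra)) as [N HN].
  exists (Nat.max N 1). intros k Hk.
  assert (Hk1 : 1 <= INR k) by (apply (le_INR 1); lia).
  assert (Hgrow : Rpower (INR k) (1 - a) <= Rpower (INR k + 1) (1 - a))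
    by (apply Rle_Rpower_l; lra).
  assert (Hsplit : Rpower (INR k + 1) (1 - a) = (INR k + 1) * Rpower (INR k + 1) (- a))
    by (unfold Rminus; rewrite Rpower_plus, Rpower_1; lra).
  specialize (HN k ltac:(lia)). pose proof (Rpower_pos (INR k + 1) (- a)).
  nra.
Qed.

Lemma Rpower_sum_slowly_varying (p q C a : R) :
  0 < C <= 1 -> 0 < a < 1 ->
  exists N : nat, forall k, (N <= k)%nat ->
    Rpower (INR k) p + Rpower (INR k) q
      <= (1 + C * Rpower (INR (S k)) (- a) / 2)
         * (Rpower (INR (S k)) p + Rpower (INR (S k)) q).
Proof.
  intros HC Ha. set (P := Rabs p + Rabs q).
  (* the [+ 1] makes the bound force [k > 0] *)
  destruct (eventually_le_mul_Rpower_succ a (4 * P / C + 1) ltac:(lra)) as [N HN].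
  exists N. intros k Hk. rewrite S_INR. set (x := INR k).
  specialize (HN k Hk). fold x in HN.
  pose proof (Rabs_pos p). pose proof (Rabs_pos q).
  assert (HPC : 0 <= 4 * P / C)
    by (apply Rmult_le_pos; [unfold P; lra | apply Rlt_le, Rinv_0_lt_compat; lra]).
  assert (Hw : Rpower (x + 1) (- a) <= 1)
    by (apply Rpower_le_1; unfold x; pose proof (pos_INR k); lra).
  pose proof (Rpower_pos (x + 1) (- a)).
  assert (Hx : 0 < x) by nra.
  assert (Hrate : 4 * P <= C * x * Rpower (x + 1) (- a)).
  { assert (4 * P / C * C = 4 * P) by (field; lra). nra. }
  eapply Rle_trans; [apply Rpower_sum_le_succ; [exact Hx | unfold P in *; nra]|].
  apply Rmult_le_compat_r;
    [pose proof (Rpower_pos (x + 1) p); pose proof (Rpower_pos (x + 1) q); lra|].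
  apply Rplus_le_compat_l. apply Rmult_le_reg_r with x; [exact Hx|].
  assert (2 * P / x * x = 2 * P) by (field; lra). unfold P in *; lra.
Qed.

Theorem lemma2 (r : nat -> R) (C1 C2 a gamma eps : R)
  (hC1 : 0 < C1 < 1) (hC2 : 0 < C2) (ha : 0 < a < 1)
  (heps : 0 < eps < 1 - a)
  (hrec : forall k : nat, (1 <= k)%nat ->
     r (S k) <= (1 - C1 * Rpower (INR k) (- a)) * r k
                + C2 * (Rpower (INR k) (-2 * a + eps)
                        + Rpower (INR k) (-2 * gamma + a + eps))) :
  exists E : R, forall k : nat, (1 <= k)%nat ->
    r (S k) <= (Rpower (INR k) (-2 * gamma + 2 * a + eps)
                + Rpower (INR k) (- a + eps)) * E.
Proof.
  set (s := fun k => Rpower (INR k) (-2 * gamma + 2 * a + eps) + Rpower (INR k) (- a + eps)).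
  set (c := fun k => C1 * Rpower (INR k) (- a)).
  destruct (Rpower_sum_slowly_varying (-2 * gamma + 2 * a + eps) (- a + eps) C1 a
              ltac:(lra) ha) as [N Hslow].
  apply (bound_by_slowly_varying r s c (C2 / C1) N).
  - apply Rlt_le, Rdiv_lt_0_compat; lra.
  - intros k. apply Rplus_lt_0_compat; apply Rpower_pos.
  - intros k Hk. unfold c. pose proof (Rpower_pos (INR k) (- a)).
    assert (Rpower (INR k) (- a) <= 1)
      by (apply Rpower_le_1; [apply (le_INR 1); exact Hk | lra]).
    nra.
  - exact Hslow.
  - intros k Hk. eapply Rle_trans; [apply hrec, Hk|]. apply Rplus_le_compat_l.
    unfold c, s.
    replace (-2 * a + eps) with (- a + (- a + eps)) by ring.
    replace (-2 * gamma + a + eps) with (- a + (-2 * gamma + 2 * a + eps)) by ring.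
    rewrite !Rpower_plus. right. field. lra.
Qed.
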